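(* For each notion of guarding $\mathfrak{g}$, there is a natural isomorphism \[ \theta : H^{\mathfrak{g}} \circ \mathbb{G}^{\mathfrak{g}} \; \cong \; \mathbb{H} \circ H^{\mathfrak{g}} \] such that, for all $\sigma$-structures $\mathcal{A}$ (omitting $\mathfrak{g}$), $\varepsilon_{H\mathcal{A}}\circ\theta_{\mathcal{A}} = H\varepsilon_{\mathcal{A}}$ and $\delta_{H\mathcal{A}}\circ\theta_{\mathcal{A}} = \mathbb{H}\theta_{\mathcal{A}}\circ\theta_{\mathbb{G}\mathcal{A}}\circ H\delta_{\mathcal{A}}$. Thus $\theta$ forms an Eilenberg-Moore law.
   Context: $\mathfrak{g}$ is atom, loose or clique guarding. $H^{\mathfrak{g}}$ is the functor from $\sigma$-structures to hypergraphs sending $\mathcal{A}$ to $(A,E)$ with $E$ the set of $\mathfrak{g}$-guarded subsets of $\mathcal{A}$. $\mathbb{G}^{\mathfrak{g}}$ is the guarded comonad on $\sigma$-structures and $\mathbb{H}$ the hypergraph comonad; both are built from equivalence classes $[p,a]$ of focussed plays $\langle p,a\rangle$ ($p$ a non-empty list of guarded sets, resp. hyperedges, $a$ in the last element), where $\langle p,a\rangle\sim\langle q,a'\rangle$ iff $a=a'$, $p\sqcap q$ non-empty, and $a$ lies in the last element of every play on the prefix-order paths from $p\sqcap q$ to $p$ and $q$. In $\mathbb{G}\mathcal{A}$, $R^{\mathbb{G}\mathcal{A}}=\{([p,a_1],\ldots,[p,a_r])\mid R^{\mathcal{A}}(a_1,\ldots,a_r)\}$; in $\mathbb{H}(V,E)$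 the hyperedges are $\{[p,a]\mid a\in U\}$ with $U\in E$ the last element of $p$. In both, $\varepsilon([p,a])=a$ and $\delta([[U_1,\ldots,U_n],a])=[[T_1,\ldots,T_n],[[U_1,\ldots,U_n],a]]$ with $T_j=\{[[U_1,\ldots,U_j],b]\mid b\in U_j\}$. *)

From HB Require Import structures.
From mathcomp Require Import all_boot.
From mathcomp Require Import boolp classical_sets functions cardinality.
From Stdlib Require List.

Set Implicit Arguments.
Unset Strict Implicit.
Unset Printing Implicit Defensive.

Local Open Scope classical_set_scope.

Definition play (V : Type) := (seq (set V) * V)%type.

Definition prefix {T : Type} (c p : seq T) : Prop := exists s, p = c ++ s.

Definition is_meet {T : Type} (c p q : seq T) : Prop :=
  [/\ prefix c p, prefix c q & forall d, prefix d p -> prefix d q -> prefix d c].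

Definition play_equiv {V : Type} (x y : play V) : Prop :=
  x.2 = y.2 /\
  exists c, [/\ is_meet c x.1 y.1, c <> [::],
    (forall r, prefix c r -> prefix r x.1 -> last set0 r x.2) &
    (forall r, prefix c r -> prefix r y.1 -> last set0 r y.2)].

Definition focussed {V : Type} (E : set (set V)) (x : play V) : Prop :=
  [/\ x.1 <> [::], (forall U, List.In U x.1 -> E U) & last set0 x.1 x.2].

Definition cls {V : Type} (E : set (set V)) (x : play V) : set (play V) :=
  [set y | focussed E y /\ play_equiv x y].

Definition is_cls {V : Type} (E : set (set V)) (S : set (play V)) : Prop :=
  exists x, focussed E x /\ S = cls E x.

Definition Cls {V : Type} (E : set (set V)) : Type := {S : set (play V) | is_cls E S}.

Definition mkCls {V : Type} (E : set (set V)) (x : play V) (hx : focussed E x) : Cls E :=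
  exist _ (cls E x) (ex_intro _ x (conj hx erefl)).

Definition rep {V : Type} {E : set (set V)} (S : Cls E) : play V :=
  proj1_sig (cid (proj2_sig S)).

Lemma rep_spec {V : Type} {E : set (set V)} (S : Cls E) :
  focussed E (rep S) /\ proj1_sig S = cls E (rep S).
Proof. by rewrite /rep; case: cid. Qed.

Definition eps {V : Type} {E : set (set V)} (S : Cls E) : V := (rep S).2.

Definition clsE {V : Type} (E : set (set V)) (x : play V) (d : Cls E) : Cls E :=
  match pselect (focussed E x) with left h => mkCls h | right _ => d end.

Definition mapplay {V W : Type} (h : V -> W) (x : play V) : play W :=
  (map (fun U => h @` U) x.1, h x.2).

Lemma focussed_map {V W : Type} (E : set (set V)) (E' : set (set W)) (h : V -> W) :
  (forall e, E e -> E' (h @` e)) ->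
  forall x, focussed E x -> focussed E' (mapplay h x).
Proof.
move=> hE [p a] [/= hp hin hl]; split => /=.
- by case: p hp {hin hl}.
- move=> U /List.in_map_iff [U0 [<- hU0]]; exact: hE (hin _ hU0).
- have -> : (set0 : set W) = h @` set0 by rewrite image_set0.
  by rewrite (last_map (fun U => h @` U)); exists a.
Qed.

Definition cls_map {V W : Type} {E : set (set V)} {E' : set (set W)} {h : V -> W}
  (hE : forall e, E e -> E' (h @` e)) (S : Cls E) : Cls E' :=
  mkCls (focussed_map hE (rep_spec S).1).

Definition pstep {V : Type} (E : set (set V)) (p : seq (set V)) : set (Cls E) :=
  [set c | exists b, last set0 p b /\ proj1_sig c = cls E (p, b)].
Arguments pstep {V} E p.

Definition deltaplay {V : Type} {E : set (set V)} (S : Cls E) : play (Cls E) :=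
  ([seq pstep E (take j (rep S).1) | j <- iota 1 (size (rep S).1)], S).

Record hypergraph := HGraph { hv : Type; he : set (set hv) }.
Arguments he : clear implicits.

Definition hmor (G1 G2 : hypergraph) (h : hv G1 -> hv G2) : Prop :=
  forall e, he G1 e -> he G2 (h @` e).
Arguments hmor : clear implicits.

Definition hedgeH {V : Type} (E : set (set V)) : set (set (Cls E)) :=
  [set T | exists p, [/\ p <> [::], (forall U, List.In U p -> E U) & T = pstep E p]].
Arguments hedgeH {V} E.

Definition HH (G : hypergraph) : hypergraph := @HGraph (Cls (he G)) (hedgeH (he G)).

Definition Hmap (G1 G2 : hypergraph) (h : hv G1 -> hv G2) (hh : hmor G1 G2 h) :
  hv (HH G1) -> hv (HH G2) := cls_map hh.

Lemma pstep_focussed {V : Type} {E : set (set V)} (S : Cls E) :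
  focussed (hedgeH E) ([:: pstep E (rep S).1], S).
Proof.
have [[hp hin hl] hS] := rep_spec S.
split => //=.
- move=> U [<-|//]; by exists (rep S).1.
- exists (rep S).2; split => //; rewrite hS; by case: (rep S).
Qed.

Definition deltaH {V : Type} {E : set (set V)} (S : Cls E) : Cls (hedgeH E) :=
  clsE (deltaplay S) (mkCls (pstep_focussed S)).

Record signature := Signature { sym : Type; ar : sym -> nat }.

Record sstruct (s : signature) := MkStruct {
  car : Type;
  rel : forall R : sym s, ('I_(ar R) -> car) -> Prop }.

Definition hom (s : signature) (A B : sstruct s) (f : car A -> car B) : Prop :=
  forall (R : sym s) (t : 'I_(ar R) -> car A), rel t -> rel (f \o t).

Inductive guarding := Atom | Loose | Clique.

Definition atom_guarded (s : signature) (A : sstruct s) (S : set (car A)) : Prop :=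
  (exists a, S = [set a]) \/
  exists (R : sym s) (t : 'I_(ar R) -> car A), rel t /\ S = range t.

Definition loose_guarded (s : signature) (A : sstruct s) (S : set (car A)) : Prop :=
  exists k (g : 'I_k -> set (car A)),
    [/\ forall i, atom_guarded (g i), forall i, g i `<=` S &
        forall a b, S a -> S b -> exists i, g i a /\ g i b].

Definition clique_guarded (s : signature) (A : sstruct s) (S : set (car A)) : Prop :=
  finite_set S /\
  forall a b, S a -> S b -> exists G, atom_guarded G /\ G a /\ G b.

Definition guarded (g : guarding) (s : signature) (A : sstruct s) : set (set (car A)) :=
  match g with
  | Atom => @atom_guarded s A
  | Loose => @loose_guarded s A
  | Clique => @clique_guarded s A
  end.
Arguments guarded g {s} A.

(* the functor H^g on objects; on morphisms it is the identity on maps *)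
Definition Hg (g : guarding) (s : signature) (A : sstruct s) : hypergraph :=
  @HGraph (car A) (guarded g A).

Lemma atom_guarded_hom (s : signature) (A B : sstruct s) (f : car A -> car B) :
  hom f -> forall S, atom_guarded S -> atom_guarded (f @` S).
Proof.
move=> hf S [[a ->]|[R [t [ht ->]]]].
- by left; exists (f a); rewrite image_set1.
- right; exists R, (f \o t); split; first exact: hf.
  by rewrite image_comp.
Qed.

Lemma guarded_hom (g : guarding) (s : signature) (A B : sstruct s) (f : car A -> car B) :
  hom f -> hmor (Hg g A) (Hg g B) f.
Proof.
move=> hf; case: g => S /=.
- exact: atom_guarded_hom.
- move=> [k [gg [hg hsub hpair]]].
  exists k, (fun i => f @` gg i); split.
  + by move=> i; apply: atom_guarded_hom.
  + by move=> i; apply: image_subset.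
  + move=> _ _ [a Sa <-] [b Sb <-]; have [i [ia ib]] := hpair a b Sa Sb.
    by exists i; split; [exists a | exists b].
- move=> [hfin hpair]; split; first exact: finite_image.
  move=> _ _ [a Sa <-] [b Sb <-]; have [G [hG [Ga Gb]]] := hpair a b Sa Sb.
  exists (f @` G); split; first exact: atom_guarded_hom.
  by split; [exists a | exists b].
Qed.

Arguments guarded_hom g {s A B f}.

Lemma guarded_set1 (g : guarding) (s : signature) (A : sstruct s) (a : car A) :
  guarded g A [set a].
Proof.
have ha : atom_guarded [set a] by left; exists a.
case: g => //=.
- exists 1, (fun _ => [set a]); split.
  + by move=> _.
  + by move=> _ x.
  + by move=> x y hx hy; exists ord0; split.
- split; first exact: finite_set1.
  by move=> x y hx hy; exists [set a].
Qed.

Lemma sgl_focussed (g : guarding) (s : signature) (A : sstruct s) (a : car A) :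
  focussed (guarded g A) ([:: [set a]], a).
Proof. split => //= U [<-|//]; exact: guarded_set1. Qed.

Definition GS (g : guarding) (s : signature) (A : sstruct s) : sstruct s :=
  @MkStruct s (Cls (guarded g A))
    (fun R cs => exists (p : seq (set (car A))) (a : 'I_(ar R) -> car A),
        rel a /\ forall i, focussed (guarded g A) (p, a i) /\
                           proj1_sig (cs i) = cls (guarded g A) (p, a i)).

Definition Gmap (g : guarding) (s : signature) (A B : sstruct s) (f : car A -> car B)
  (hf : hom f) : car (GS g A) -> car (GS g B) :=
  cls_map (guarded_hom g hf).

Definition deltaG (g : guarding) (s : signature) (A : sstruct s) :
  car (GS g A) -> car (GS g (GS g A)) :=
  fun S => clsE (deltaplay S) (mkCls (sgl_focussed g (A := GS g A) S)).
Arguments Gmap g {s A B f}.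
Arguments deltaG g {s} A.

From Pilot Require Import Defs.
From HB Require Import structures.
From mathcomp Require Import all_boot.
From mathcomp Require Import boolp classical_sets functions cardinality.
From Stdlib Require List.

(** Both [H (G A)] and [HH (H A)] have as vertices the classes [[p,a]] of
    focussed plays over the guarded sets of [A], so [theta] is the identity and
    naturality and the counit law are immediate.  The content is that the two hypergraph
    structures agree: a set [T] of classes is guarded in [G A] iff it is of the
    form [{[p,b] | b in U}] with [U] the last element of [p].  Guards of [U]
    lift along [p] through [b |-> [p,b]].  Conversely, the histories of a class
    [c] (the lists [q] with [[q, eps c] = c]) are convex for the prefix order and
    have a least element, its anchor; so if every two classes of a finite [T]
    share a history, the longest anchor is a common history [q] of all of [T],
    and [T = {[q ++ [W], b] | b in W}] with [W = eps T] guarded.  With the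
    hyperedges identified, [delta] of [G] and of [HH] build the same play. *)

Set Implicit Arguments.
Unset Strict Implicit.
Unset Printing Implicit Defensive.
Local Open Scope classical_set_scope.

Local Notation prefix := Defs.prefix.

Lemma In_last (T : Type) (x0 : T) (p : seq T) : p <> [::] -> List.In (last x0 p) p.
Proof.
elim: p x0 => [//|u p IH] x0 _ /=; case: p IH => [|v p] IH /=; first by left.
by right; apply: IH.
Qed.

Lemma In_mem (T : eqType) (x : T) s : List.In x s -> x \in s.
Proof.
elim: s => [//|u s IH] /= [->|h]; rewrite inE; first by rewrite eqxx.
by rewrite IH ?orbT.
Qed.

Section Prefix.
Variable T : Type.
Implicit Types c p q r : seq T.

Lemma prefix_refl p : prefix p p.
Proof. by exists [::]; rewrite cats0. Qed.

Lemma prefix_trans p q r : prefix p q -> prefix q r -> prefix p r.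
Proof. by move=> [s ->] [t ->]; exists (s ++ t); rewrite catA. Qed.

Lemma nil_prefix p : prefix [::] p.
Proof. by exists p. Qed.

Lemma prefix_nil p : prefix p [::] -> p = [::].
Proof. by case: p => // x p [s]. Qed.

Lemma prefix_neq_nil c p : prefix c p -> c <> [::] -> p <> [::].
Proof. by move=> [s ->]; case: c. Qed.

Lemma prefix_In c p (U : T) : prefix c p -> List.In U c -> List.In U p.
Proof. by move=> [s ->] h; apply/List.in_app_iff; left. Qed.

Lemma prefix_take c p : prefix c p <-> c = take (size c) p.
Proof.
split=> [[s ->]|e]; first by rewrite take_size_cat.
by exists (drop (size c) p); rewrite {1}e cat_take_drop.
Qed.

Lemma prefix_size c p : prefix c p -> size c <= size p.
Proof. by move=> [s ->]; rewrite size_cat leq_addr. Qed.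

Lemma prefix_size_eq c p : prefix c p -> size p <= size c -> c = p.
Proof. by move=> /prefix_take e hs; rewrite e take_oversize. Qed.

Lemma prefix_antisym p q : prefix p q -> prefix q p -> p = q.
Proof. by move=> hpq hqp; apply: prefix_size_eq hpq (prefix_size hqp). Qed.

Lemma prefix_total p q r : prefix p r -> prefix q r -> prefix p q \/ prefix q p.
Proof.
move=> /prefix_take hp /prefix_take hq.
case: (leqP (size p) (size q)) => h.
- by left; apply/prefix_take; rewrite {1}hp {1}hq take_takel.
- by right; apply/prefix_take; rewrite {1}hq {1}hp take_takel // ltnW.
Qed.

Lemma meet_exists p q : exists c, is_meet c p q.
Proof.
have nil_meet p' q' : (forall d, prefix d p' -> prefix d q' -> d = [::]) ->
    is_meet [::] p' q'.
  by move=> h; split=> [||d hp hq]; rewrite ?(h d hp hq); apply: nil_prefix.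
elim: p q => [|u p IH] q.
  by exists [::]; apply: nil_meet => d /prefix_nil.
case: q => [|v q].
  by exists [::]; apply: nil_meet => d _ /prefix_nil.
case: (pselect (u = v)) => [<-|neq_uv]; last first.
  exists [::]; apply: nil_meet => -[//|w d] [s [uw _]] [t [vw _]].
  by case: neq_uv; rewrite uw vw.
have [c [[s ->] [t ->] hc]] := IH q; exists (u :: c); split.
- by exists s.
- by exists t.
- case=> [|w d]; first by move=> *; apply: nil_prefix.
  move=> [s' [<- hs']] [t' [ht']].
  have [r er] := hc d (ex_intro _ s' hs') (ex_intro _ t' ht').
  by exists r; rewrite er.
Qed.

Lemma meet_prefix c p q : is_meet c p q -> prefix p q -> c = p.
Proof.
move=> [hcp _ hc] hpq; apply: prefix_antisym hcp _.
exact: hc (prefix_refl p) hpq.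
Qed.

End Prefix.

Section PlayEquiv.
Variable V : Type.
Implicit Types (E : set (set V)) (x y z : play V).

Lemma play_equiv_sym x y : play_equiv x y -> play_equiv y x.
Proof.
move=> [e [c [[cx cy c_max] c_nil Px Py]]]; split => //; exists c; split => //.
by split => // d dy dx; apply: c_max.
Qed.

Lemma play_equiv_refl E x : focussed E x -> play_equiv x x.
Proof.
case: x => p a [hp _ hl]; split => //; exists p.
by split => //= [|r h1 h2|r h1 h2]; rewrite -?(prefix_antisym h1 h2) //;
  split; [exact: prefix_refl|exact: prefix_refl|].
Qed.

Lemma play_equiv_trans x y z : play_equiv x y -> play_equiv y z -> play_equiv x z.
Proof.
case: x y z => p a [q b] [r e] [/= <- [c1 [[c1p c1q _] c1n P1x P1y]]]
  [/= <- [c2 [[c2q c2r _] c2n P2y P2z]]]; split => //=.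
have [c [cp cr c_max]] := meet_exists p r.
case: (prefix_total c1q c2q) => h12.
- have h1 : prefix c1 c by apply: c_max => //; exact: prefix_trans h12 c2r.
  exists c; split => //.
  + by move=> c0; apply: c1n; apply: prefix_nil; rewrite -c0.
  + by move=> r' a1 a2; apply: P1x => //; exact: prefix_trans a1.
  + move=> r' a1 a2; case: (prefix_total c2r a2) => h.
    * exact: P2z.
    * by apply: P1y; [exact: prefix_trans a1|exact: prefix_trans c2q].
- have h2 : prefix c2 c by apply: c_max => //; exact: prefix_trans h12 c1p.
  exists c; split => //.
  + by move=> c0; apply: c2n; apply: prefix_nil; rewrite -c0.
  + move=> r' a1 a2; case: (prefix_total c1p a2) => h.
    * exact: P1x.
    * by apply: P2y; [exact: prefix_trans a1|exact: prefix_trans c1q].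
  + by move=> r' a1 a2; apply: P2z => //; exact: prefix_trans a1.
Qed.

Lemma cls_play_equiv E x y : play_equiv x y -> cls E x = cls E y.
Proof.
move=> hxy; apply/seteqP; split => z [fz hz]; split => //.
- exact: play_equiv_trans (play_equiv_sym hxy) hz.
- exact: play_equiv_trans hxy hz.
Qed.

Lemma play_equiv_cls E x y : focussed E y -> cls E x = cls E y -> play_equiv x y.
Proof.
move=> fy e; have : cls E y y by split => //; exact: play_equiv_refl fy.
by rewrite -e => -[].
Qed.

Lemma play_equiv_prefix (q1 q2 : seq (set V)) a : prefix q1 q2 -> q1 <> [::] ->
  (forall r, prefix q1 r -> prefix r q2 -> last set0 r a) -> play_equiv (q1, a) (q2, a).
Proof.
move=> h12 hn hP; split => //; exists q1; split => //=.
- by split => //; exact: prefix_refl.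
- by move=> r a1 a2; rewrite -(prefix_antisym a1 a2); apply: hP => //; exact: prefix_refl.
Qed.

Lemma eq_cls E1 E2 x : (forall T, E1 T <-> E2 T) -> cls E1 x = cls E2 x.
Proof.
move=> hE; apply/seteqP; split => y [[? hin ?] ?]; split => //; by split => // U /hin /hE.
Qed.

Lemma cls_rcons E p a U :
  focussed E (p, a) -> U a -> cls E (rcons p U, a) = cls E (p, a).
Proof.
move=> [hp _ hl] Ua; symmetry; apply: cls_play_equiv; apply: play_equiv_prefix => //.
- by exists [:: U]; rewrite cats1.
- move=> r h1 h2; have := prefix_size h2; rewrite size_rcons.
  case: (ltnP (size p) (size r)) => hs _.
  + by rewrite (prefix_size_eq h2) ?size_rcons // last_rcons.
  + by rewrite -(prefix_size_eq h1 hs).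
Qed.

End PlayEquiv.

Section Histories.
Variables (V : Type) (E : set (set V)).
Implicit Types (c : Cls E) (q : seq (set V)).

Lemma Cls_inj c c' : proj1_sig c = proj1_sig c' -> c = c'.
Proof.
case: c c' => [S h] [S' h'] /= e; subst S'; congr exist; exact: Prop_irrelevance.
Qed.

Definition history c q :=
  focussed E (q, eps c) /\ proj1_sig c = cls E (q, eps c).

Lemma eps_cls c q a : focussed E (q, a) -> proj1_sig c = cls E (q, a) -> eps c = a.
Proof.
have [fr hr] := rep_spec c; move=> fq e.
have : cls E (q, a) (rep c) by rewrite -e hr; split => //; exact: play_equiv_refl fr.
by case=> _ [/= e' _]; rewrite /eps -e'.
Qed.

Lemma history_cls c q a : focussed E (q, a) -> proj1_sig c = cls E (q, a) -> history c q.
Proof. by move=> f e; rewrite /history (eps_cls f e). Qed.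

Lemma history_rep c : history c (rep c).1.
Proof. by rewrite /history /eps; case: (rep_spec c); case: (rep c). Qed.

Lemma history_equiv c q1 q2 : history c q1 -> history c q2 ->
  play_equiv (q1, eps c) (q2, eps c).
Proof. by move=> [f1 e1] [f2 e2]; apply: (play_equiv_cls f2); rewrite -e1 -e2. Qed.

Lemma history_prefix c q1 q2 : history c q2 -> prefix q1 q2 -> q1 <> [::] ->
  (forall r, prefix q1 r -> prefix r q2 -> last set0 r (eps c)) -> history c q1.
Proof.
move=> [[_ hin _] e] h12 hq1 hP; split; first split => //=.
- by move=> U hU; apply: hin; exact: prefix_In h12 hU.
- by apply: hP => //; exact: prefix_refl.
- by rewrite e; symmetry; apply: cls_play_equiv; apply: play_equiv_prefix.
Qed.

Lemma history_meet c q1 q2 : history c q1 -> history c q2 ->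
  exists m, [/\ prefix m q1, prefix m q2 & history c m].
Proof.
move=> h1 h2; have [_ [m [[hm1 hm2 _] mn P1 P2]]] := history_equiv h1 h2.
by exists m; split => //; apply: history_prefix h1 hm1 mn P1.
Qed.

Lemma history_convex c q1 r q2 : history c q1 -> history c q2 ->
  prefix q1 r -> prefix r q2 -> history c r.
Proof.
move=> h1 h2 h1r hr2; have [_ [m [hm _ _ P2]]] := history_equiv h1 h2.
have em := meet_prefix hm (prefix_trans h1r hr2).
apply: (history_prefix h2 hr2).
- by apply: prefix_neq_nil h1r _; case: h1 => -[].
- by move=> r' a1 a2; apply: P2 => //; rewrite em; exact: prefix_trans a1.
Qed.

Lemma anchor_exists c : exists qa, history c qa /\ forall q, history c q -> prefix qa q.
Proof.
suff: forall n q, size q = n -> history c q ->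
    exists qa, history c qa /\ forall q, history c q -> prefix qa q.
  by move=> /(_ _ _ erefl (history_rep c)).
elim/ltn_ind => n IH q hs hq.
case: (pselect (exists q', history c q' /\ ~ prefix q q')) => [[q' [hq' nq]]|nex].
- have [m [m1 m2 hm]] := history_meet hq hq'.
  have lt : size m < n.
    rewrite -hs ltn_neqAle prefix_size // andbT.
    by apply/eqP => es; apply: nq; rewrite -(prefix_size_eq m1) ?es.
  exact: IH lt m erefl hm.
- exists q; split => // q' h'; case: (pselect (prefix q q')) => // np.
  by case: nex; exists q'.
Qed.

Definition anchor c : seq (set V) := proj1_sig (cid (anchor_exists c)).

Lemma history_anchor c : history c (anchor c).
Proof. by rewrite /anchor; case: cid => x []. Qed.

Lemma anchor_prefix c q : history c q -> prefix (anchor c) q.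
Proof. by move=> hq; rewrite /anchor; case: cid => x /= [_ /(_ q hq)]. Qed.

Let K := {classic (Cls E)}.

Lemma longest_anchor (s : seq K) : s <> [::] ->
  {in s &, forall c c', prefix (anchor c) (anchor c') \/ prefix (anchor c') (anchor c)} ->
  exists2 c0, c0 \in s & {in s, forall c, prefix (anchor c) (anchor c0)}.
Proof.
elim: s => [//|c s IH] _ hcmp.
have in_cons y : y \in s -> y \in c :: s by rewrite inE => ->; rewrite orbT.
have hcmp_s : {in s &, forall c c', prefix (anchor c) (anchor c') \/
    prefix (anchor c') (anchor c)}.
  by move=> x y /in_cons hx /in_cons hy; apply: hcmp.
have [->|/eqP/IH/(_ hcmp_s) [c0 c0s hc0]] := eqVneq s [::].
  by exists c => [|c']; rewrite ?mem_head // inE => /eqP ->; apply: prefix_refl.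
have [h|h] := hcmp c c0 (mem_head _ _) (in_cons _ c0s).
- exists c0; first exact: in_cons.
  by move=> c'; rewrite inE => /predU1P[->|/hc0].
- exists c; first exact: mem_head.
  move=> c'; rewrite inE => /predU1P[->|/hc0 hc']; first exact: prefix_refl.
  exact: prefix_trans hc' h.
Qed.

Lemma common_history (S : set (Cls E)) : finite_set S -> S !=set0 ->
  (forall c c', S c -> S c' -> exists q, history c q /\ history c' q) ->
  exists q, forall c, S c -> history c q.
Proof.
move=> /(@finite_seqP K) [s ->] [x sx] hpair.
have [c0 c0s hc0] : exists2 c0, c0 \in s & {in s, forall c, prefix (anchor c) (anchor c0)}.
  apply: longest_anchor; first by move=> s0; move: sx; rewrite s0.
  move=> c c' hc hc'; have [q [hq hq']] := hpair c c' hc hc'.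
  exact: prefix_total (anchor_prefix hq) (anchor_prefix hq').
exists (anchor c0) => c hc; have [q [hq hq0]] := hpair c c0 hc c0s.
exact: history_convex (history_anchor c) hq (hc0 c hc) (anchor_prefix hq0).
Qed.

End Histories.

Definition cls_set (V : Type) (E : set (set V)) (q : seq (set V)) (W : set V) :
  set (Cls E) := [set c | exists b, W b /\ proj1_sig c = cls E (q, b)].
Arguments cls_set {V} E q W.

Section HyperedgesH.
Variables (V : Type) (E : set (set V)).

Lemma pstep_cls_set p : pstep E p = cls_set E p (last set0 p).
Proof. by []. Qed.

Lemma hedgeH_cls_set q W : q <> [::] -> (forall U, List.In U q -> E U) ->
  E W -> W `<=` last set0 q -> hedgeH E (cls_set E q W).
Proof.
move=> hq hin hW sub; exists (rcons q W); split.
- by case: (q).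
- by move=> U; rewrite -cats1 => /List.in_app_iff [/hin|[<-|]].
rewrite pstep_cls_set last_rcons; apply/seteqP; split => c [b [Wb e]];
  by exists b; split; rewrite // e cls_rcons //; split => //; apply: sub.
Qed.

Lemma hedgeH_common_history (T : set (Cls E)) : finite_set T ->
  (forall c c', T c -> T c' -> exists q, history c q /\ history c' q) ->
  E (@eps _ E @` T) -> E set0 -> hedgeH E T.
Proof.
move=> fT hpair hET hE0.
have [->|/set0P[c0 Tc0]] := eqVneq T set0.
  rewrite (_ : set0 = cls_set E [:: set0] set0).
    by apply: hedgeH_cls_set => // U [<-|].
  by apply/seteqP; split => c // [b []].
have [q hq] := common_history fT (ex_intro _ c0 Tc0) hpair.
have [[hqn hin _] _] := hq c0 Tc0.
have -> : T = cls_set E q (@eps _ E @` T).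
  apply/seteqP; split => c.
  - by move=> Tc; exists (eps c); split; [exists c | exact: (hq c Tc).2].
  - move=> [b [[c' Tc' <-] e]]; suff -> : c = c' by [].
    by apply: Cls_inj; rewrite e (hq c' Tc').2.
by apply: hedgeH_cls_set => // _ [c Tc <-]; case: (hq c Tc) => -[].
Qed.

Lemma finite_cls_set p U :
  p <> [::] -> (forall W, List.In W p -> E W) -> U `<=` last set0 p ->
  finite_set U -> finite_set (cls_set E p U).
Proof.
move=> hp hin sub fU.
have [->|/set0P[c0 _]] := eqVneq (cls_set E p U) set0; first exact: finite_set0.
apply: sub_finite_set (finite_image (fun b => clsE (p, b) c0) fU).
move=> c [b [Ub e]]; exists b => //; rewrite /clsE; case: pselect => [h|[]].
- exact: Cls_inj.
- by split => //; apply: sub.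
Qed.

End HyperedgesH.

Section GuardedComonad.
Variables (g : guarding) (s : signature) (A : sstruct s).
Local Notation E := (guarded g A).
Local Notation atom_guardedG := (@atom_guarded s (GS g A)).

Lemma atom_guarded_guarded (S : set (car A)) : atom_guarded S -> E S.
Proof.
move=> hS; case: g => //=.
- by exists 1, (fun _ => S); split => [//|_ //|a b Sa Sb]; exists ord0.
- split; last by move=> a b Sa Sb; exists S; split.
  by case: hS => [[a ->]|[R [t [_ ->]]]]; [apply: finite_set1 | apply: finite_image].
Qed.

Lemma atom_guarded_cls_set p W : p <> [::] -> (forall U, List.In U p -> E U) ->
  W `<=` last set0 p -> atom_guarded W -> atom_guardedG (cls_set E p W).
Proof.
move=> hp hin sub [[a eW]|[R [t [rt eW]]]]; subst W.
- have h : focussed E (p, a) by split => //; apply: sub.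
  left; exists (mkCls h); apply/seteqP; split => c.
  + by move=> [b [-> e]]; apply: Cls_inj.
  + by move=> ->; exists a.
- have h i : focussed E (p, t i) by split => //; apply: sub; exists i.
  right; exists R, (fun i => mkCls (h i)); split.
  + by exists p, t; split => // i; split.
  + apply/seteqP; split => c.
    * by move=> [b [[i _ <-] e]]; exists i => //; apply: Cls_inj.
    * by move=> [i _ <-]; exists (t i); split => //; exists i.
Qed.

Lemma atom_guarded_history (G : set (Cls E)) c c' : atom_guardedG G -> G c -> G c' ->
  exists q, history c q /\ history c' q.
Proof.
move=> [[x ->] -> ->|[R [cs [[q [t [_ hcs]]] ->]]] [i _ <-] [j _ <-]].
- by exists (rep x).1; split; apply: history_rep.
- by exists q; split; [case: (hcs i) | case: (hcs j)]; apply: history_cls.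
Qed.

Lemma atom_guarded_eps (G : set (Cls E)) : atom_guardedG G -> atom_guarded (@eps _ E @` G).
Proof.
move=> [[x ->]|[R [cs [[q [t [rt hcs]]] ->]]]].
- by left; exists (eps x); rewrite image_set1.
- have eps_cs i : eps (cs i) = t i by case: (hcs i); apply: eps_cls.
  right; exists R, t; split => //; rewrite image_comp.
  by congr (_ @` _); apply: funext => i /=.
Qed.

Lemma atom_guarded_finite (G : set (Cls E)) : atom_guardedG G -> finite_set G.
Proof.
move=> [[x ->]|[R [cs [_ ->]]]]; [exact: finite_set1 | exact: finite_image].
Qed.

Lemma hedgeH_atom_guarded (T : set (Cls E)) : atom_guardedG T -> hedgeH E T.
Proof.
move=> [[x ->]|[R [cs [[q [t [rt hcs]]] ->]]]].
- have [[hqn hin hl] e] := history_rep x.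
  rewrite (_ : [set x] = cls_set E (rep x).1 [set eps x]).
    by apply: hedgeH_cls_set => //; [apply: guarded_set1 | move=> _ ->].
  apply/seteqP; split => c; first by move=> ->; exists (eps x).
  by move=> [b [-> e']]; apply: Cls_inj; rewrite e' e.
have Et : E (range t) by apply: atom_guarded_guarded; right; exists R, t.
have [ar0|ar_gt0] := posnP (ar R).
  have no_index (i : 'I_(ar R)) : False by case: i; rewrite ar0.
  rewrite (_ : range cs = cls_set E [:: range t] (range t)).
    by apply: hedgeH_cls_set => // U [<-|].
  by apply/seteqP; split=> c [i]; [|move=> [[j _ _] _]]; case: no_index.
have [[hqn hin _] _] := hcs (Ordinal ar_gt0).
rewrite (_ : range cs = cls_set E q (range t)).
  by apply: hedgeH_cls_set => // _ [i _ <-]; case: (hcs i) => -[].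
apply/seteqP; split=> c.
- by move=> [i _ <-]; exists (t i); split; [exists i | case: (hcs i)].
- move=> [_ [[i _ <-] e]]; exists i => //; apply: Cls_inj.
  by rewrite e; case: (hcs i).
Qed.

End GuardedComonad.

Lemma guarded_GS_hedgeH (g : guarding) (s : signature) (A : sstruct s)
    (T : set (car (GS g A))) :
  guarded g (GS g A) T -> hedgeH (guarded g A) T.
Proof.
case: g T => /= T; first exact: (hedgeH_atom_guarded (g := Atom)).
- move=> [k [G [hG GT hpair]]]; apply: hedgeH_common_history.
  + apply: (sub_finite_set (B := \bigcup_(i in setT) G i)).
      by move=> c Tc; have [i [Gi _]] := hpair c c Tc Tc; exists i.
    by apply: bigcup_finite => // i _; apply: atom_guarded_finite (hG i).
  + move=> c c' Tc Tc'; have [i [Gc Gc']] := hpair c c' Tc Tc'.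
    exact: atom_guarded_history (hG i) Gc Gc'.
  + exists k, (fun i => @eps _ (guarded Loose A) @` G i); split.
    * by move=> i; apply: atom_guarded_eps.
    * by move=> i; apply: image_subset.
    * move=> _ _ [c Tc <-] [c' Tc' <-]; have [i [Gc Gc']] := hpair c c' Tc Tc'.
      by exists i; split; [exists c | exists c'].
  + by exists 0, (fun _ => set0); split => [[]|[]|a b []].
- move=> [fT hpair]; apply: hedgeH_common_history => //.
  + move=> c c' Tc Tc'; have [G [hG [Gc Gc']]] := hpair c c' Tc Tc'.
    exact: atom_guarded_history hG Gc Gc'.
  + split; first exact: finite_image.
    move=> _ _ [c Tc <-] [c' Tc' <-]; have [G [hG [Gc Gc']]] := hpair c c' Tc Tc'.
    exists (@eps _ (guarded Clique A) @` G); split; first exact: atom_guarded_eps.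
    by split; [exists c | exists c'].
Qed.

Lemma hedgeH_guarded_GS (g : guarding) (s : signature) (A : sstruct s)
    (T : set (car (GS g A))) :
  hedgeH (guarded g A) T -> guarded g (GS g A) T.
Proof.
move=> [p [hp hin {T}->]]; rewrite pstep_cls_set.
have := hin _ (In_last set0 hp); case: g p hp hin => /= p hp hin hU.
- exact: (atom_guarded_cls_set (g := Atom)).
- have [k [G [hG GU hpair]]] := hU.
  exists k, (fun i => cls_set (guarded Loose A) p (G i)); split.
  + by move=> i; apply: (atom_guarded_cls_set (g := Loose)) => //; apply: GU.
  + by move=> i c [b [Gb e]]; exists b; split => //; apply: GU i b Gb.
  + move=> c c' [b [Ub e]] [b' [Ub' e']]; have [i [Gb Gb']] := hpair b b' Ub Ub'.
    by exists i; split; [exists b | exists b'].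
- have [fU hpair] := hU; split; first exact: finite_cls_set.
  move=> c c' [b [Ub e]] [b' [Ub' e']]; have [G [hG [Gb Gb']]] := hpair b b' Ub Ub'.
  have EG : guarded Clique A G := atom_guarded_guarded Clique hG.
  have hpG : rcons p G <> [::] by case: (p).
  have hinG U : List.In U (rcons p G) -> guarded Clique A U.
    by rewrite -cats1 => /List.in_app_iff [/hin|[<-|]].
  exists (cls_set (guarded Clique A) (rcons p G) G); split.
    by apply: (atom_guarded_cls_set (g := Clique)); rewrite ?last_rcons.
  by split; [exists b | exists b']; rewrite cls_rcons //; split.
Qed.

Lemma guarded_GSE (g : guarding) (s : signature) (A : sstruct s)
    (T : set (car (GS g A))) :
  guarded g (GS g A) T <-> hedgeH (guarded g A) T.
Proof. by split; [apply: guarded_GS_hedgeH | apply: hedgeH_guarded_GS]. Qed.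

Lemma clsE_focussed (V : Type) (E : set (set V)) (x : play V) (d : Cls E) :
  focussed E x -> proj1_sig (clsE x d) = cls E x.
Proof. by rewrite /clsE; case: pselect. Qed.

Lemma cls_map_id (V : Type) (E E' : set (set V)) (hE : forall e, E e -> E' (id @` e))
    (c : Cls E) :
  proj1_sig (cls_map hE c) = cls E' (rep c).
Proof.
rewrite /= /mapplay (eq_map (fun U => image_id U)) map_id.
by case: (rep c).
Qed.

Lemma deltaplay_focussed (V : Type) (E : set (set V)) (c : Cls E) :
  focussed (hedgeH E) (deltaplay c).
Proof.
have [[hp hin hl] hc] := rep_spec c; rewrite /deltaplay.
case: (rep c) hp hin hl hc => p a /= hp hin hl hc.
have p_gt0 : 0 < size p by case: (p) hp.
split => /=.
- by case: (size p) p_gt0.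
- move=> U /List.in_map_iff [j [<- /In_mem]]; rewrite mem_iota => /andP[j_gt0 _].
  exists (take j p); split => //.
  + by case: (p) j j_gt0 hp => // u p' [].
  + by move=> W hW; apply: hin; apply: prefix_In hW; exists (drop j p); rewrite cat_take_drop.
- have -> : size p = (size p).-1 + 1 by rewrite addn1 prednK.
  by rewrite iotaD map_cat last_cat /= add1n prednK // take_size; exists a.
Qed.

Lemma val_deltaH (V : Type) (E : set (set V)) (c : Cls E) :
  proj1_sig (deltaH c) = cls (hedgeH E) (deltaplay c).
Proof. exact/clsE_focussed/deltaplay_focussed. Qed.

Lemma val_deltaG (g : guarding) (s : signature) (A : sstruct s) (c : car (GS g A)) :
  proj1_sig (deltaG g A c) = cls (hedgeH (guarded g A)) (deltaplay c).
Proof.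
have [hc hin hl] := deltaplay_focussed c.
rewrite /deltaG clsE_focussed; first exact/eq_cls/guarded_GSE.
by split => // U /hin /guarded_GSE.
Qed.

Theorem theorem6p3 (g : guarding) (s : signature) :
  exists (theta : forall A : sstruct s, hv (Hg g (GS g A)) -> hv (HH (Hg g A)))
         (htheta : forall A : sstruct s, hmor (Hg g (GS g A)) (HH (Hg g A)) (theta A)),
  [/\ (* each component is an isomorphism of hypergraphs *)
      (forall A : sstruct s, exists phi : hv (HH (Hg g A)) -> hv (Hg g (GS g A)),
          [/\ cancel (theta A) phi, cancel phi (theta A) & hmor (HH (Hg g A)) (Hg g (GS g A)) phi]),
      (* naturality: HH(H f) o theta_A = theta_B o H(G f) *)
      (forall (A B : sstruct s) (f : car A -> car B) (hf : hom f),
          Hmap (guarded_hom g hf) \o theta A = theta B \o Gmap g hf),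
      (* eps_{HA} o theta_A = H eps_A *)
      (forall A : sstruct s,
          (@eps _ (he (Hg g A))) \o theta A = @eps _ (guarded g A)) &
      (* delta_{HA} o theta_A = HH theta_A o theta_{GA} o H delta_A *)
      (forall A : sstruct s,
          (@deltaH _ (he (Hg g A))) \o theta A
          = Hmap (htheta A) \o theta (GS g A) \o deltaG g A)].
Proof.
have hid (A : sstruct s) : hmor (Hg g (GS g A)) (HH (Hg g A)) id.
  by move=> T; rewrite image_id; apply: guarded_GS_hedgeH.
exists (fun A => id), hid; split => // A.
- by exists id; split => // T; rewrite image_id; apply: hedgeH_guarded_GS.
- apply: funext => c /=; apply: Cls_inj.
  rewrite val_deltaH cls_map_id -(eq_cls (rep _) (guarded_GSE (A := A))).
  by rewrite -(rep_spec _).2 val_deltaG.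
Qed.
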